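(* Let $A=\{(0,0,0),(0,1,0),(1,0,0),(1,1,0)\}\subset\mathbb{R}^3$ and let $\lambda\subset\mathbb{R}^3$ be the line $x=y=\tfrac12$. Then the set $\Lambda$ of points $P\in\lambda\cap\mathbb{Q}^3$ such that the Euclidean distance $|PQ|$ is rational for every $Q\in A$ is dense in $\lambda$ (with the Euclidean topology).
   Context: No further context is needed. *)

From Stdlib Require Import Reals QArith Qreals List.
Open Scope R_scope.

Definition pt : Type := (R * R * R)%type.
Definition px (P : pt) : R := fst (fst P).
Definition py (P : pt) : R := snd (fst P).
Definition pz (P : pt) : R := snd P.

Definition dist3 (P Q : pt) : R :=
  sqrt ((px P - px Q) ^ 2 + (py P - py Q) ^ 2 + (pz P - pz Q) ^ 2).

Definition is_rat (x : R) : Prop := exists q : Q, Q2R q = x.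

Definition rat_point (P : pt) : Prop :=
  is_rat (px P) /\ is_rat (py P) /\ is_rat (pz P).

Definition A_set : list pt :=
  ((0, 0, 0) :: (0, 1, 0) :: (1, 0, 0) :: (1, 1, 0) :: nil)%R.

Definition on_lambda (P : pt) : Prop := px P = 1/2 /\ py P = 1/2.

Definition in_Lambda (P : pt) : Prop :=
  on_lambda P /\ rat_point P /\ (forall Q, In Q A_set -> is_rat (dist3 P Q)).

(** The point (1/2, 1/2, z) of the line is at distance sqrt (1/2 + z^2) from
    all four points of A, so it lies in Lambda exactly when z and
    sqrt (1/2 + z^2) are both rational.  The rational parametrisation
    z = (t - 1/(2t))/2, w = (t + 1/(2t))/2 of the hyperbola w^2 - z^2 = 1/2
    maps (0, +oo) continuously and monotonically onto R, and sends rational t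
    to rational points; density of Q in (0, +oo) then gives density of Lambda. *)

From Stdlib Require Import Reals QArith Qreals List Lra.
Open Scope R_scope.

Lemma is_rat_Q2R (q : Q) : is_rat (Q2R q).
Proof. now exists q. Qed.

Lemma is_rat_IZR (n : Z) : is_rat (IZR n).
Proof. exists (inject_Z n). unfold Q2R; simpl; field. Qed.

Lemma is_rat_plus (x y : R) : is_rat x -> is_rat y -> is_rat (x + y).
Proof. intros [p <-] [q <-]. exists (p + q)%Q. apply Q2R_plus. Qed.

Lemma is_rat_opp (x : R) : is_rat x -> is_rat (- x).
Proof. intros [p <-]. exists (- p)%Q. apply Q2R_opp. Qed.

Lemma is_rat_minus (x y : R) : is_rat x -> is_rat y -> is_rat (x - y).
Proof. intros Hx Hy. apply is_rat_plus; [exact Hx | now apply is_rat_opp]. Qed.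

Lemma is_rat_mult (x y : R) : is_rat x -> is_rat y -> is_rat (x * y).
Proof. intros [p <-] [q <-]. exists (p * q)%Q. apply Q2R_mult. Qed.

Lemma is_rat_inv (x : R) : x <> 0 -> is_rat x -> is_rat (/ x).
Proof.
  intros Hx [p <-]. exists (/ p)%Q. apply Q2R_inv.
  intros E. apply Hx. rewrite (Qeq_eqR _ _ E). unfold Q2R; simpl; ring.
Qed.

Lemma is_rat_div (x y : R) : y <> 0 -> is_rat x -> is_rat y -> is_rat (x / y).
Proof. intros Hy Hx Hy'. apply is_rat_mult; [exact Hx | now apply is_rat_inv]. Qed.

Lemma rat_approx_from_above (x d : R) : 0 < d ->
  exists q : Q, x < Q2R q <= x + d.
Proof.
  intros Hd.
  destruct (archimed (/ d)) as [Hn _].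
  assert (Hid : 0 < / d) by now apply Rinv_0_lt_compat.
  set (p := Z.to_pos (up (/ d))).
  assert (Hp : IZR (Zpos p) = IZR (up (/ d))).
  { unfold p; rewrite Z2Pos.id; [reflexivity | apply lt_IZR; lra]. }
  assert (Hp0 : 0 < IZR (Zpos p)) by (rewrite Hp; lra).
  assert (Hdp : 1 <= d * IZR (Zpos p)).
  { rewrite Hp. apply (Rmult_le_reg_l (/ d)); [exact Hid |].
    rewrite <- Rmult_assoc, Rinv_l by lra. lra. }
  destruct (archimed (x * IZR (Zpos p))) as [Hm1 Hm2].
  exists (Qmake (up (x * IZR (Zpos p))) p).
  unfold Q2R; simpl. split.
  - apply (Rmult_lt_reg_r (IZR (Zpos p))); [exact Hp0 |].
    rewrite Rmult_assoc, Rinv_l by lra. lra.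
  - apply (Rmult_le_reg_r (IZR (Zpos p))); [exact Hp0 |].
    rewrite Rmult_assoc, Rinv_l by lra. lra.
Qed.

Lemma dist3_on_lambda (P P' : pt) : on_lambda P -> on_lambda P' ->
  dist3 P P' = Rabs (pz P - pz P').
Proof.
  intros [HxP HyP] [HxP' HyP']. unfold dist3.
  rewrite HxP, HyP, HxP', HyP', <- sqrt_Rsqr_abs. f_equal. unfold Rsqr. ring.
Qed.

Lemma dist3_lambda_A (z : R) (Q : pt) : In Q A_set ->
  dist3 (1/2, 1/2, z) Q = sqrt (1/2 + z ^ 2).
Proof.
  intros HQ. unfold dist3, px, py, pz.
  destruct HQ as [<- | [<- | [<- | [<- | []]]]]; cbn [fst snd]; f_equal; field.
Qed.

Definition hyp_z (t : R) : R := (t - / (2 * t)) / 2.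
Definition hyp_w (t : R) : R := (t + / (2 * t)) / 2.

Lemma hyp_pythagoras (t : R) : t <> 0 -> 1/2 + hyp_z t ^ 2 = hyp_w t ^ 2.
Proof. intros Ht. unfold hyp_z, hyp_w. field. exact Ht. Qed.

Lemma hyp_w_gt0 (t : R) : 0 < t -> 0 < hyp_w t.
Proof.
  intros Ht. unfold hyp_w.
  assert (0 < / (2 * t)) by (apply Rinv_0_lt_compat; lra). lra.
Qed.

Lemma is_rat_hyp_z (t : R) : t <> 0 -> is_rat t -> is_rat (hyp_z t).
Proof.
  intros Ht Hrt. unfold hyp_z.
  assert (H2 : is_rat 2) by apply is_rat_IZR.
  apply is_rat_div; [lra | | exact H2].
  apply is_rat_minus; [exact Hrt |].
  apply is_rat_inv; [lra | now apply is_rat_mult].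
Qed.

Lemma is_rat_hyp_w (t : R) : t <> 0 -> is_rat t -> is_rat (hyp_w t).
Proof.
  intros Ht Hrt. unfold hyp_w.
  assert (H2 : is_rat 2) by apply is_rat_IZR.
  apply is_rat_div; [lra | | exact H2].
  apply is_rat_plus; [exact Hrt |].
  apply is_rat_inv; [lra | now apply is_rat_mult].
Qed.

Lemma hyp_z_onto (z : R) :
  exists t, 0 < t /\ hyp_z t = z.
Proof.
  set (s := sqrt (z ^ 2 + 1/2)).
  assert (Hs2 : s * s = z ^ 2 + 1/2) by (apply sqrt_sqrt; nra).
  assert (Hs0 : 0 <= s) by apply sqrt_pos.
  assert (Ht : 0 < z + s) by nra.
  exists (z + s). split; [exact Ht |].
  unfold hyp_z. apply (Rmult_eq_reg_r (2 * (z + s))); [| lra].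
  field_simplify; [nra | lra].
Qed.

(** On [t0, +oo) the slope of hyp_z is at most (1 + 1/(2 t0^2))/2 <= 1 + 1/t0^2. *)
Lemma hyp_z_lipschitz (t0 t : R) : 0 < t0 <= t ->
  Rabs (hyp_z t - hyp_z t0) <= (t - t0) * (1 + / (t0 * t0)).
Proof.
  intros [Ht0 Ht].
  assert (E : hyp_z t - hyp_z t0 = (t - t0) * (1 + / (2 * t * t0)) / 2).
  { unfold hyp_z. field. lra. }
  assert (Hinv0 : 0 < / (2 * t * t0)) by (apply Rinv_0_lt_compat; nra).
  assert (Hinv : / (2 * t * t0) <= / (t0 * t0)) by (apply Rinv_le_contravar; nra).
  rewrite E, Rabs_pos_eq by nra. nra.
Qed.

Lemma hyp_point_in_Lambda (t : R) : 0 < t -> is_rat t ->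
  in_Lambda (1/2, 1/2, hyp_z t).
Proof.
  intros Ht Hrt.
  assert (Hhalf : is_rat (1/2)) by (exists (1 # 2)%Q; unfold Q2R; simpl; field).
  split; [| split].
  - split; reflexivity.
  - split; [| split]; [exact Hhalf | exact Hhalf |].
    apply is_rat_hyp_z; [lra | exact Hrt].
  - intros Q HQ. rewrite dist3_lambda_A by exact HQ.
    rewrite hyp_pythagoras, sqrt_pow2 by (lra || apply Rlt_le, hyp_w_gt0, Ht).
    apply is_rat_hyp_w; [lra | exact Hrt].
Qed.

Theorem proposition3p1 :
  forall P0 : pt, on_lambda P0 ->
  forall eps : R, 0 < eps ->
  exists P : pt, in_Lambda P /\ dist3 P P0 < eps.
Proof.
  intros P0 HP0 eps Heps.
  destruct (hyp_z_onto (pz P0)) as [t0 [Ht0 Hz0]].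
  set (C := 1 + / (t0 * t0)).
  assert (HC : 0 < C) by (assert (0 < / (t0 * t0)) by (apply Rinv_0_lt_compat; nra);
                          unfold C; lra).
  destruct (rat_approx_from_above t0 (eps / (2 * C))) as [q [Hq1 Hq2]].
  { apply Rdiv_lt_0_compat; lra. }
  exists (1/2, 1/2, hyp_z (Q2R q)). split.
  - apply hyp_point_in_Lambda; [lra | apply is_rat_Q2R].
  - rewrite dist3_on_lambda by (exact HP0 || split; reflexivity).
    rewrite <- Hz0.
    apply (Rle_lt_trans _ ((Q2R q - t0) * C)); [apply hyp_z_lipschitz; lra |].
    apply (Rle_lt_trans _ (eps / (2 * C) * C)); [apply Rmult_le_compat_r; lra |].
    replace (eps / (2 * C) * C) with (eps / 2) by (field; lra). lra.
Qed.
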